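(* Let $T\in\mathbb{R}$, let $v\ge2$ be an integer or $v=\infty$, and for each integer $2\le j<v+1$ let $S_j:\Delta_j\to\mathbb{R}$ be a continuous function, such that the family satisfies the coherence axiom: whenever $2\le m<n<v+1$, $1\le i_1<\cdots<i_m\le n$ and $p\in\Delta_n$ has $p_j=0$ for all $j\notin\{i_1,\ldots,i_m\}$, then $S_n(p_1,\ldots,p_n)=S_m(p_{i_1},\ldots,p_{i_m})$. Let $\mathbf{T}$ be an $(n,v)$-tree with $n\ge 2$. Then for all $x_1,\ldots,x_n\in\mathbb{R}$, $$(x_1\oplus_S\cdots\oplus_S x_n)_{\mathbf{T}}=\min_{p\in\Delta_n}\Big(\sum_{i=1}^np_ix_i-T\,S_{\mathbf{T}}(p_1,\ldots,p_n)\Big).$$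
   Context: $\Delta_k=\{p\in[0,\infty)^k:\sum_ip_i=1\}$. An $(n,v)$-tree is a finite rooted tree in which every vertex is either a leaf or has between $2$ and $v$ children, ordered from left to right, and whose $n$ leaves are labelled bijectively by $\{1,\ldots,n\}$. For $2\le m<v+1$ and $y_1,\ldots,y_m\in\mathbb{R}$ define the $m$-ary operation $\bigoplus_m(y_1,\ldots,y_m)=\min_{q\in\Delta_m}\big(\sum_jq_jy_j-T\,S_m(q)\big)$. For a tree (or subtree, whose leaves carry a label set) define recursively: a single leaf labelled $i$ has value $x_i$ and entropy $0$; if the root has subtrees $\mathbf{A}_1,\ldots,\mathbf{A}_m$ (left to right) with label sets $L_1,\ldots,L_m$, the value is $(x_1\oplus_S\cdots\oplus_Sx_n)_{\mathbf{T}}=\bigoplus_m(\text{value of }\mathbf{A}_1,\ldots,\text{value of }\mathbf{A}_m)$ and, for a probability vector $p$ indexed by the labels, with $P_j=\sum_{i\in L_j}p_i$, $$S_{\mathbf{T}}(p)=S_m(P_1,\ldots,P_m)+\sum_{j=1}^mP_j\,S_{\mathbf{A}_j}\big((p_i/P_j)_{i\in L_j}\big),$$ where a term with $P_j=0$ is taken to be $0$. *)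

From HB Require Import structures.
From mathcomp Require Import all_boot all_order all_algebra.
From mathcomp Require Import all_classical all_reals all_analysis.
Set Implicit Arguments. Unset Strict Implicit. Unset Printing Implicit Defensive.
Import Order.TTheory GRing.Theory Num.Theory.
Import numFieldNormedType.Exports.
Local Open Scope classical_set_scope.
Local Open Scope ring_scope.

Definition simplex (R : realType) (k : nat) : set 'rV[R]_k :=
  [set p | (forall i, 0 <= p ord0 i) /\ \sum_(i < k) p ord0 i = 1].

(* v : option nat, None standing for v = infinity. [below v j] means j < v + 1. *)
Definition below (v : option nat) (j : nat) : bool :=
  if v is Some v' then (j <= v')%N else true.

(* The m-ary operation (+)_m : min over q in Delta_m (written as inf; the
   minimum is attained when S m is continuous on the compact simplex). *)
Definition bigoplus (R : realType) (T : R) (S : forall j, 'rV[R]_j -> R)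
  (m : nat) (y : 'rV[R]_m) : R :=
  inf [set \sum_(j < m) q ord0 j * y ord0 j - T * S m q | q in @simplex R m].

Inductive tree (n : nat) : Type :=
| Leaf of 'I_n
| Node of seq (tree n).
Arguments Leaf {n}.
Arguments Node {n}.

Fixpoint leaves n (t : tree n) : seq 'I_n :=
  match t with
  | Leaf i => [:: i]
  | Node ts => flatten (map (@leaves n) ts)
  end.

Fixpoint arity_ok (v : option nat) n (t : tree n) : bool :=
  match t with
  | Leaf _ => true
  | Node ts => [&& (2 <= size ts)%N, below v (size ts) & all (@arity_ok v n) ts]
  end.

Definition is_nv_tree (v : option nat) n (t : tree n) : bool :=
  arity_ok v t && perm_eq (leaves t) (enum 'I_n).

Fixpoint tree_val (R : realType) (T : R) (S : forall j, 'rV[R]_j -> R) n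
  (x : 'I_n -> R) (t : tree n) : R :=
  match t with
  | Leaf i => x i
  | Node ts =>
      let ys := map (@tree_val R T S n x) ts in
      bigoplus T S (\row_(j < size ys) nth 0 ys j)
  end.

Definition mass (R : realType) n (t : tree n) (p : 'I_n -> R) : R :=
  \sum_(i <- leaves t) p i.

Fixpoint tent (R : realType) (S : forall j, 'rV[R]_j -> R) n
  (t : tree n) (p : 'I_n -> R) : R :=
  match t with
  | Leaf _ => 0
  | Node ts =>
      S (size ts) (\row_(j < size ts) mass (nth t ts j) p)
      + \sum_(z <- map (fun u => if mass u p == 0 then 0
                                 else mass u p * tent S u (fun i => p i / mass u p)) ts) z
  end.

Definition coherent (R : realType) (v : option nat) (S : forall j, 'rV[R]_j -> R) : Prop :=
  forall (m k : nat), (2 <= m)%N -> (m < k)%N -> below v k ->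
  forall f : 'I_m -> 'I_k, (forall a b : 'I_m, (a < b)%N -> (f a < f b)%N) ->
  forall p : 'rV[R]_k, @simplex R k p ->
  (forall j : 'I_k, (forall a, f a != j) -> p ord0 j = 0) ->
  S k p = S m (\row_(a < m) p ord0 (f a)).

Arguments simplex R k : clear implicits.
Arguments bigoplus {R} T S {m} y.
Arguments tree_val {R} T S {n} x t.
Arguments tent {R} S {n} t p.
Arguments mass {R n} t p.
Arguments coherent {R} v S.

From HB Require Import structures.
From mathcomp Require Import all_boot all_order all_algebra.
From mathcomp Require Import all_classical all_reals all_analysis.
From mathcomp Require Import ring.
Import Order.TTheory GRing.Theory Num.Theory.
Import numFieldNormedType.Exports.
Local Open Scope classical_set_scope.
Local Open Scope ring_scope.

(* A distribution p on the leaves of a tree with root subtrees A_1, ..., A_m is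
   the same as the vector P of subtree masses together with the renormalised
   distributions q_j = p|A_j / P_j, and
     sum_i p_i x_i - T S_T(p)
       = sum_j P_j (sum_(i in A_j) q_ji x_i - T S_A_j(q_j)) - T S_m(P).
   Minimising first over each subtree (induction) and then over P gives exactly
   the recursive definition of the tree value.  The minimum over P is attained
   because S_m is continuous on the compact simplex, and a global minimiser is
   glued as p = sum_j P_j q_j from minimisers q_j of the subtrees. *)

Section Simplex.
Context {R : realType}.

Lemma continuous_sum (U : topologicalType) (I : Type) (s : seq I)
    (h : I -> U -> R) :
  (forall j, continuous (h j)) -> continuous (fun u => \sum_(j <- s) h j u).
Proof.
move=> hc; elim: s => [|a s IH].
  by under eq_fun do rewrite big_nil; exact: cst_continuous.
under eq_fun do rewrite big_cons.
by move=> u; apply: continuousD; [exact: hc | exact: IH].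
Qed.

Lemma simplex_closed m : closed (simplex R m).
Proof.
have -> : simplex R m =
    (\bigcap_(i in setT) ((fun q : 'rV[R]_m => q ord0 i) @^-1` [set r | 0 <= r]))
    `&` ((fun q : 'rV[R]_m => \sum_(i < m) q ord0 i) @^-1` [set r | r = 1]).
  by apply/seteqP; split => q /= [q0 q1]; split => // i *; exact: q0.
apply: closedI.
  apply: closed_bigI => i _; apply: preimage_closed; last exact: closed_ge.
  by move=> q _; exact: coord_continuous.
apply: preimage_closed; last exact: closed_eq.
by move=> q _; apply: continuous_sum => j; exact: coord_continuous.
Qed.

Lemma simplex_compact m : compact (simplex R m).
Proof.
apply: (subclosed_compact (simplex_closed m)
  (rV_compact (fun _ : 'I_m => @segment_compact R 0 1))).
move=> q [q0 q1] i /=; rewrite in_itv /= q0 /= -q1 (bigD1 i) //= lerDl.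
by apply: sumr_ge0 => j _; exact: q0.
Qed.

Lemma simplex_nonempty {m} : (0 < m)%N -> simplex R m !=set0.
Proof.
move=> m0; pose k := Ordinal m0.
exists (\row_j (j == k)%:R); split; first by move=> i; rewrite mxE ler0n.
rewrite (bigD1 k) //= mxE eqxx big1 ?addr0 // => i /negbTE ik.
by rewrite mxE ik.
Qed.

Lemma inf_image_attained (U : Type) (f : U -> R) (A : set U) c :
  A c -> (forall u, A u -> f c <= f u) -> inf (f @` A) = f c.
Proof.
move=> Ac fc; apply/eqP; rewrite eq_le; apply/andP; split.
  by apply: ge_inf; [exists (f c) => _ [u Au <-]; exact: fc | exists c].
by apply: lb_le_inf; [exists (f c), c | move=> _ [u Au <-]; exact: fc].
Qed.

Definition free_energy (T : R) {m} (f : 'rV[R]_m -> R) (y q : 'rV[R]_m) : R :=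
  \sum_(j < m) q ord0 j * y ord0 j - T * f q.

Lemma bigoplusE (T : R) (S : forall j, 'rV[R]_j -> R) m (y : 'rV[R]_m) :
  bigoplus T S y = inf (free_energy T (S m) y @` simplex R m).
Proof. by []. Qed.

Lemma free_energy_continuous (T : R) {m} {f : 'rV[R]_m -> R} (y : 'rV[R]_m) :
  {within simplex R m, continuous f} ->
  {within simplex R m, continuous free_energy T f y}.
Proof.
move=> fc q.
have lin : continuous (fun q : 'rV[R]_m => \sum_(j < m) q ord0 j * y ord0 j).
  by apply: continuous_sum => j u; apply: continuousM;
    [exact: coord_continuous | exact: cst_continuous].
apply: (@continuousB R R^o (subspace (simplex R m)) _ _ q).
  exact: (continuous_subspaceT lin).
by apply: (@continuousM R (subspace (simplex R m)) (fun=> T) f);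
  [exact: cst_continuous | exact: fc].
Qed.

Lemma bigoplus_min (T : R) {S : forall j, 'rV[R]_j -> R} {m} (y : 'rV[R]_m) :
  (0 < m)%N -> {within simplex R m, continuous (S m)} ->
  exists2 q, simplex R m q &
    bigoplus T S y = free_energy T (S m) y q /\
    forall q', simplex R m q' -> free_energy T (S m) y q <= free_energy T (S m) y q'.
Proof.
move=> m0 Sc.
have [q /set_mem qs qmin] := EVT_min_rV (simplex_nonempty m0) (simplex_compact m)
  (free_energy_continuous T y Sc).
have qmin' q' : simplex R m q' -> free_energy T (S m) y q <= free_energy T (S m) y q'.
  by move=> q's; apply: qmin; rewrite inE.
by exists q => //; split => //; rewrite bigoplusE; exact: inf_image_attained.
Qed.

Lemma bigoplus_le (T : R) {S : forall j, 'rV[R]_j -> R} {m} (y q : 'rV[R]_m) :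
  (0 < m)%N -> {within simplex R m, continuous (S m)} -> simplex R m q ->
  bigoplus T S y <= free_energy T (S m) y q.
Proof.
by move=> m0 Sc qs; have [q0 _ [-> q0min]] := bigoplus_min T y m0 Sc; exact: q0min.
Qed.

End Simplex.

Section FlattenNth.
Variable A : eqType.

Lemma uniq_flatten_nth (s : seq (seq A)) j :
  uniq (flatten s) -> uniq (nth [::] s j).
Proof.
elim: s j => [|a s IH] [|j] //=; rewrite cat_uniq => /and3P[_ _ us] //.
exact: IH.
Qed.

Lemma uniq_flatten_nth_disjoint (s : seq (seq A)) j k a :
  uniq (flatten s) -> j != k -> a \in nth [::] s j -> a \notin nth [::] s k.
Proof.
have in_flatten l i : a \in nth [::] l i -> a \in flatten l.
  by case: (ltnP i (size l)) => [il ai | /(nth_default [::]) -> //];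
    apply/flattenP; exists (nth [::] l i); rewrite ?mem_nth.
elim: s j k => [|b s IH] [|j] [|k] //=; rewrite cat_uniq => /and3P[_ bs us] // jk ai.
- by apply: contra bs => ak; apply/hasP; exists a => //; exact: in_flatten ak.
- by apply: contra bs => ak; apply/hasP; exists a => //; exact: in_flatten ai.
- exact: IH j k us jk ai.
Qed.

End FlattenNth.

Section Trees.
Context {n : nat}.
Local Notation d0 := (@Node n [::]).

(* The generated principle [tree_ind] has no induction hypothesis for the
   children of a [Node]. *)
Fixpoint tree_nth_ind (P : tree n -> Prop)
  (PL : forall i, P (Leaf i))
  (PN : forall ts, (forall j, (j < size ts)%N -> P (nth d0 ts j)) -> P (Node ts))
  (t : tree n) : P t :=
  match t with
  | Leaf i => PL i
  | Node ts => PN ts ((fix go (l : seq (tree n)) :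
        forall j, (j < size l)%N -> P (nth d0 l j) :=
       match l with
       | [::] => fun j jl => False_ind _ (ltac:(discriminate jl))
       | u :: l' => fun j =>
           match j return (j < size (u :: l'))%N -> P (nth d0 (u :: l') j) with
           | 0 => fun _ => tree_nth_ind P PL PN u
           | j'.+1 => fun jl => go l' j' jl
           end
       end) ts)
  end.

Lemma nth_leaves (ts : seq (tree n)) j :
  leaves (nth d0 ts j) = nth [::] (map (@leaves n) ts) j.
Proof.
case: (ltnP j (size ts)) => [jts | tsj]; first by rewrite (nth_map d0).
by rewrite !nth_default ?size_map.
Qed.

Lemma uniq_leaves_nth (ts : seq (tree n)) j :
  uniq (leaves (Node ts)) -> uniq (leaves (nth d0 ts j)).
Proof. by rewrite nth_leaves; exact: uniq_flatten_nth. Qed.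

Lemma leaves_nth_disjoint (ts : seq (tree n)) j k i :
  uniq (leaves (Node ts)) -> j != k ->
  i \in leaves (nth d0 ts j) -> i \notin leaves (nth d0 ts k).
Proof. by rewrite !nth_leaves; exact: uniq_flatten_nth_disjoint. Qed.

Lemma leaves_nth_sub (ts : seq (tree n)) j i :
  (j < size ts)%N -> i \in leaves (nth d0 ts j) -> i \in leaves (Node ts).
Proof.
rewrite nth_leaves => jts ij; apply/flattenP.
exists (nth [::] (map (@leaves n) ts) j) => //.
by rewrite mem_nth ?size_map.
Qed.

Context {R : realType}.

Lemma big_leaves_Node (ts : seq (tree n)) (f : 'I_n -> R) :
  \sum_(i <- leaves (Node ts)) f i =
  \sum_(j < size ts) \sum_(i <- leaves (nth d0 ts j)) f i.
Proof. by rewrite /= big_flatten /= big_map (big_nth d0) big_mkord. Qed.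

Variable S : forall j, 'rV[R]_j -> R.

Lemma tent_Node (ts : seq (tree n)) (p : 'I_n -> R) :
  tent S (Node ts) p =
  S (size ts) (\row_(j < size ts) mass (nth d0 ts j) p) +
  \sum_(j < size ts) (if mass (nth d0 ts j) p == 0 then 0
      else mass (nth d0 ts j) p *
           tent S (nth d0 ts j) (fun i => p i / mass (nth d0 ts j) p)).
Proof.
rewrite /= big_map (big_nth d0) big_mkord; congr (S _ _ + _).
by apply/rowP => j; rewrite !mxE (set_nth_default d0).
Qed.

Lemma eq_tent (t : tree n) (p p' : 'I_n -> R) :
  {in leaves t, p =1 p'} -> tent S t p = tent S t p'.
Proof.
elim/tree_nth_ind: t p p' => [i|ts IH] p p' pp' //; rewrite !tent_Node.
have pp'_nth j : (j < size ts)%N -> {in leaves (nth d0 ts j), p =1 p'}.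
  by move=> jts i ij; apply: pp'; exact: leaves_nth_sub ij.
have mass_nth j : (j < size ts)%N -> mass (nth d0 ts j) p = mass (nth d0 ts j) p'.
  by move=> jts; apply: eq_big_seq; exact: pp'_nth.
congr (S _ _ + _); first by apply/rowP => j; rewrite !mxE mass_nth.
apply: eq_bigr => j _; rewrite mass_nth //; case: ifP => // _; congr (_ * _).
by apply: IH => // i ij; rewrite (pp'_nth j).
Qed.

Variable T : R.

Lemma tree_val_Node (x : 'I_n -> R) (ts : seq (tree n)) :
  tree_val T S x (Node ts) =
  bigoplus T S (\row_(j < size ts) tree_val T S x (nth d0 ts j)).
Proof.
rewrite /= size_map; congr (bigoplus T S _).
by apply/rowP => j; rewrite !mxE (nth_map d0).
Qed.

End Trees.

Section TreeEnergy.
Context {R : realType} (T : R) {v : option nat} (S : forall j, 'rV[R]_j -> R).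
Context {n : nat} (x : 'I_n -> R).
Local Notation d0 := (@Node n [::]).

Definition tree_energy (t : tree n) (p : 'I_n -> R) : R :=
  \sum_(i <- leaves t) p i * x i - T * tent S t p.

Definition subtree_energy (u : tree n) (p : 'I_n -> R) : R :=
  \sum_(i <- leaves u) p i * x i -
  T * (if mass u p == 0 then 0 else mass u p * tent S u (fun i => p i / mass u p)).

Lemma tree_energy_Node (ts : seq (tree n)) (p : 'I_n -> R) :
  tree_energy (Node ts) p =
  \sum_(j < size ts) subtree_energy (nth d0 ts j) p
  - T * S (size ts) (\row_(j < size ts) mass (nth d0 ts j) p).
Proof.
rewrite /tree_energy /subtree_energy tent_Node big_leaves_Node sumrB -mulr_sumr.
ring.
Qed.

Lemma subtree_energy_rescale {u : tree n} {p q : 'I_n -> R} {c : R} :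
  {in leaves u, forall i, p i = c * q i} -> mass u q = 1 ->
  subtree_energy u p = c * tree_energy u q.
Proof.
move=> pq q1.
have mp : mass u p = c.
  by rewrite /mass (eq_big_seq _ pq) -mulr_sumr -/(mass u q) q1 mulr1.
have lin : \sum_(i <- leaves u) p i * x i = c * \sum_(i <- leaves u) q i * x i.
  by rewrite mulr_sumr; apply: eq_big_seq => i /pq ->; rewrite mulrA.
rewrite /subtree_energy /tree_energy mp lin.
have [->|c0] := eqVneq c 0; first by rewrite !mul0r mulr0 subr0.
rewrite (eq_tent S u _ q); first by ring.
by move=> i /pq ->; rewrite mulrC mulKf.
Qed.

Definition energy_lb (t : tree n) : Prop :=
  forall p : 'I_n -> R, (forall i, 0 <= p i) -> mass t p = 1 ->
  tree_val T S x t <= tree_energy t p.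

Definition energy_attains (t : tree n) (p : 'I_n -> R) : Prop :=
  [/\ forall i, 0 <= p i, forall i, i \notin leaves t -> p i = 0,
      mass t p = 1 & tree_val T S x t = tree_energy t p].

Lemma subtree_energy_lb (u : tree n) (p : 'I_n -> R) :
  energy_lb u -> (forall i, 0 <= p i) ->
  mass u p * tree_val T S x u <= subtree_energy u p.
Proof.
move=> ulb p0; have [mp0|mp_neq0] := eqVneq (mass u p) 0.
  have pu0 : {in leaves u, forall i, p i = 0}.
    by move: mp0 => /eqP; rewrite psumr_eq0 // => /allP pu i /pu /eqP.
  rewrite /subtree_energy mp0 mul0r eqxx mulr0 subr0 big1_seq // => i /pu0 ->.
  exact: mul0r.
have mp_gt0 : 0 < mass u p by rewrite lt_def mp_neq0; apply: sumr_ge0.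
pose q i := p i / mass u p.
have q1 : mass u q = 1 by rewrite /mass /q -mulr_suml mulfV.
have -> : subtree_energy u p = mass u p * tree_energy u q.
  by apply: subtree_energy_rescale q1 => i _; rewrite /q mulrC divfK.
rewrite ler_pM2l //; apply: ulb => // i.
exact: divr_ge0 (p0 i) (ltW mp_gt0).
Qed.

Hypothesis S_continuous : forall j, (2 <= j)%N -> below v j ->
  {within simplex R j, continuous (S j)}.

Lemma energy_lb_Node (ts : seq (tree n)) :
  (2 <= size ts)%N -> below v (size ts) ->
  (forall j : 'I_(size ts), energy_lb (nth d0 ts j)) -> energy_lb (Node ts).
Proof.
move=> ts2 tsv lb_nth p p0 p1.
set P := \row_(j < size ts) mass (nth d0 ts j) p.
have Ps : simplex R (size ts) P.
  split=> [j|]; first by rewrite mxE; apply: sumr_ge0.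
  by rewrite -p1 /mass big_leaves_Node; apply: eq_bigr => j _; rewrite mxE.
rewrite tree_val_Node tree_energy_Node -/P.
apply: le_trans (bigoplus_le T _ _ (ltnW ts2) (S_continuous _ ts2 tsv) Ps) _.
rewrite /free_energy lerD2r; apply: ler_sum => j _; rewrite !mxE.
exact: subtree_energy_lb.
Qed.

Lemma energy_attains_Node (ts : seq (tree n)) (q : 'I_(size ts) -> 'I_n -> R) :
  (2 <= size ts)%N -> below v (size ts) -> uniq (leaves (Node ts)) ->
  (forall j : 'I_(size ts), energy_attains (nth d0 ts j) (q j)) ->
  exists p, energy_attains (Node ts) p.
Proof.
move=> ts2 tsv uts q_att.
set y := \row_(j < size ts) tree_val T S x (nth d0 ts j).
have [P [P0 P1] [Pmin _]] := bigoplus_min T y (ltnW ts2) (S_continuous _ ts2 tsv).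
pose p i := \sum_(j < size ts) P ord0 j * q j i.
have p_nth (k : 'I_(size ts)) :
    {in leaves (nth d0 ts k), forall i, p i = P ord0 k * q k i}.
  move=> i ik; rewrite /p (bigD1 k) //= big1 ?addr0 // => j jk.
  have [_ qj0 _ _] := q_att j; rewrite qj0 ?mulr0 //.
  by apply: (leaves_nth_disjoint _ _ _ _ uts _ ik); rewrite eq_sym.
have mass_nth (k : 'I_(size ts)) : mass (nth d0 ts k) p = P ord0 k.
  have [_ _ qk1 _] := q_att k.
  by rewrite /mass (eq_big_seq _ (p_nth k)) -mulr_sumr -/(mass _ _) qk1 mulr1.
exists p; split.
- by move=> i; apply: sumr_ge0 => j _; have [qj0 _ _ _] := q_att j; rewrite mulr_ge0.
- move=> i iN; apply: big1 => j _; have [_ qj0 _ _] := q_att j.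
  by rewrite qj0 ?mulr0 //; apply: contra iN; exact: leaves_nth_sub.
- by rewrite /mass big_leaves_Node -P1; apply: eq_bigr => k _; exact: mass_nth.
rewrite tree_val_Node -/y Pmin tree_energy_Node /free_energy.
have -> : \row_(j < size ts) mass (nth d0 ts j) p = P.
  by apply/rowP => k; rewrite mxE mass_nth.
congr (_ - _); apply: eq_bigr => k _; have [_ _ qk1 qk_val] := q_att k.
by rewrite (subtree_energy_rescale (p_nth k) qk1) mxE qk_val.
Qed.

Lemma tree_energy_min (t : tree n) : arity_ok v t -> uniq (leaves t) ->
  energy_lb t /\ exists p, energy_attains t p.
Proof.
elim/(@tree_nth_ind n): t => [i|ts IH] ok ut.
  split=> [p _|].
    rewrite /mass big_seq1 => p1.
    by rewrite /tree_energy big_seq1 /= p1 mul1r mulr0 subr0.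
  exists (fun k => (k == i)%:R); split.
  - by move=> k; rewrite ler0n.
  - by move=> k; rewrite mem_seq1 => /negbTE ->.
  - by rewrite /mass big_seq1 eqxx.
  - by rewrite /tree_energy big_seq1 /= eqxx mul1r mulr0 subr0.
case/and3P: ok => ts2 tsv ok_nth.
have IH_nth (j : 'I_(size ts)) := IH j (ltn_ord j)
  (all_nthP d0 ok_nth j (ltn_ord j)) (uniq_leaves_nth ts j ut).
split; first by apply: energy_lb_Node => // j; have [] := IH_nth j.
have /choice[q q_att] : forall j : 'I_(size ts), exists p,
    energy_attains (nth d0 ts j) p by move=> j; have [_] := IH_nth j.
exact: energy_attains_Node q_att.
Qed.

End TreeEnergy.

Theorem theorem10p9 (R : realType) (T : R) (v : option nat)
  (S : forall j : nat, 'rV[R]_j -> R)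
  (hv : forall v' : nat, v = Some v' -> (2 <= v')%N)
  (hcont : forall j : nat, (2 <= j)%N -> below v j ->
     {within simplex R j, continuous (S j)})
  (hcoh : coherent v S)
  (n : nat) (t : tree n) (hn : (2 <= n)%N) (ht : is_nv_tree v t)
  (x : 'I_n -> R) :
  (exists p : 'rV[R]_n, simplex R n p /\
     tree_val T S x t = \sum_(i < n) p ord0 i * x i - T * tent S t (fun i => p ord0 i)) /\
  (forall p : 'rV[R]_n, simplex R n p ->
     tree_val T S x t <= \sum_(i < n) p ord0 i * x i - T * tent S t (fun i => p ord0 i)).
Proof.
have [ok leaves_perm] := andP ht.
have ut : uniq (leaves t) by rewrite (perm_uniq leaves_perm) enum_uniq.
have big_leaves (f : 'I_n -> R) : \sum_(i <- leaves t) f i = \sum_(i < n) f i.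
  by rewrite (perm_big _ leaves_perm) big_enum.
have [t_lb [p [p0 _ p1 p_val]]] := tree_energy_min T S x hcont t ok ut.
split=> [|q [q0 q1]].
  have row_p : (fun i => (\row_k p k) ord0 i) = p by apply/funext => i; rewrite mxE.
  exists (\row_k p k); rewrite row_p; split.
    by split=> [i|]; rewrite ?mxE // -p1 /mass big_leaves; under eq_bigr do rewrite mxE.
  by under eq_bigr do rewrite mxE; rewrite p_val /tree_energy big_leaves.
rewrite -big_leaves; apply: (t_lb (fun i => q ord0 i)) => //.
by rewrite /mass big_leaves.
Qed.
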